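(* $V(D_k)\le S\cdot LIN(D_k)\le S\cdot OPT(D_k)\le S\cdot LIN(D_k)+\frac{S\,(m(D_k)+k)}{2}$.
   Context: Let $S>0$, let $D$ be a finite multiset of items with sizes in $(0,S]$ and $k\ge1$ an integer. $D_k$ is the collection of $k$ copies of each item of $D$; $V(D_k)$ is its total size. A $k$-times bin packing assigns all copies to bins with total size at most $S$ per bin and no two copies of the same item in one bin; $OPT(D_k)$ is the minimum number of bins. Let $c[1],\dots,c[m]$ be the distinct item sizes of $D$, $m(D_k)=m(D)=m$, $n[i]$ the number of items of size $c[i]$, $\mathbf{n}=(n[1],\dots,n[m])$. A configuration is a vector $a\in\mathbb{Z}^m_{\ge0}$ with $a_i\le n[i]$ and $\sum_ia_ic[i]\le S$; $A$ is the $m\times t$ matrix whose columns are all configurations. $LIN(D_k)$ is the optimal value of the linear program: minimize $\mathbf{1}\cdot\mathbf{x}$ subject to $A\mathbf{x}=k\mathbf{n}$, $\mathbf{x}\in\mathbb{R}^t_{\ge0}$. *)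

From HB Require Import structures.
From mathcomp Require Import all_boot all_order all_algebra.
From mathcomp Require Import boolp classical_sets reals.
Set Implicit Arguments. Unset Strict Implicit. Unset Printing Implicit Defensive.
Import Order.TTheory GRing.Theory Num.Theory.
Local Open Scope ring_scope.
Local Open Scope classical_set_scope.

Section KBinPacking.
Variables (R : realType) (S : R) (n : nat) (c : 'I_n -> R) (k : nat).
(* D is the multiset of n items, item i having size c i. *)

(* V(D_k): total size of k copies of every item *)
Definition VDk : R := k%:R * \sum_(i < n) c i.

Definition dsizes : seq R := undup [seq c i | i <- enum 'I_n].
Definition mD : nat := size dsizes.
Definition csz (i : 'I_mD) : R := nth 0 dsizes i.
Definition nsz (i : 'I_mD) : nat := #|[set j : 'I_n | c j == csz i]|.

(* candidate vectors a in Z_{>=0}^m; entries bounded by n (a_i <= n[i] <= n) *)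
Definition cand := {ffun 'I_mD -> 'I_n.+1}.
Definition is_config (a : cand) : bool :=
  [forall i, (a i <= nsz i)%N] && (\sum_(i < mD) (a i)%:R * csz i <= S).

(* feasible points of the LP  A x = k n, x >= 0 (x indexed by configurations) *)
Definition lp_feasible (x : cand -> R) : Prop :=
  (forall a, is_config a -> 0 <= x a) /\
  (forall i : 'I_mD,
     \sum_(a : cand | is_config a) (a i)%:R * x a = (k * nsz i)%:R).
Definition lp_value (x : cand -> R) : R := \sum_(a : cand | is_config a) x a.

Definition LIN : R := inf [set v | exists x, lp_feasible x /\ v = lp_value x].

(* a k-times bin packing into N bins: copy j of item i goes to bin f i j *)
Definition packing (N : nat) (f : 'I_n -> 'I_k -> 'I_N) : Prop :=
  (forall i, injective (f i)) /\
  (forall b : 'I_N, \sum_(p : 'I_n * 'I_k | f p.1 p.2 == b) c p.1 <= S).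
Definition packable (N : nat) : Prop := exists f, packing (N:=N) f.

Definition OPT : R := inf [set (N%:R : R) | N in packable].
End KBinPacking.

(* Every configuration has size at most S, so the volume is at most S times any LP value, and a
   k-times packing into N bins yields an LP solution of value N by counting the bins of each
   configuration.  Conversely, moving a feasible solution along linear dependences of its support
   (Caratheodory) gives a solution of no larger value with at most m nonzero configurations.
   Rounding its values up costs at most m extra bins; rounding them down leaves residual items of
   size at most S F, F the sum of the fractional parts, which next fit packs into 2F + k bins.
   The better rounding uses at most LIN + (m + k) / 2 bins, and any list of bins holding k n[i]
   items of each size c[i] becomes a k-times packing by dealing out the copies cyclically. *)

From Pilot Require Import Defs.
From HB Require Import structures.
From mathcomp Require Import all_boot all_order all_algebra.
From mathcomp Require Import boolp classical_sets reals.
From mathcomp Require Import zify ring lra.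
Import Order.TTheory GRing.Theory Num.Theory.
Local Open Scope ring_scope.
Set Implicit Arguments. Unset Strict Implicit. Unset Printing Implicit Defensive.

Lemma exists_nonzero_left_kernel (F : fieldType) p q (M : 'M[F]_(p, q)) :
  (q < p)%N -> exists2 u : 'rV_p, u *m M = 0 & u != 0.
Proof.
move=> qp; have : kermx M != 0.
  by rewrite -mxrank_eq0 mxrank_ker subn_eq0 -ltnNge (leq_ltn_trans (rank_leq_col M)).
by case/rowV0Pn=> u /sub_kermxP uM u0; exists u.
Qed.

Lemma exists_bracket (P : nat -> nat) N s : (forall t, P t <= P t.+1)%N ->
  (P 0 <= s < P N)%N -> exists2 t, (t < N)%N & (P t <= s < P t.+1)%N.
Proof.
move=> P_mono /andP [P0s]; elim: N => [|N IH] sN; first by rewrite ltnNge P0s in sN.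
have [/IH [t tN Pt]|PNs] := ltnP s (P N); first by exists t; rewrite // ltnW.
by exists N; rewrite ?PNs.
Qed.

Lemma card_le_window (T : finType) (A : {pred T}) (g : T -> nat) lo d :
  {in A &, injective g} -> {in A, forall x, lo <= g x < lo + d}%N -> (#|A| <= d)%N.
Proof.
move=> g_inj g_window; rewrite cardE -(size_map g) -[d](size_iota lo).
apply: uniq_leq_size => [|y /mapP [x]]; last by rewrite mem_enum mem_iota => /g_window ? ->.
by rewrite map_inj_in_uniq ?enum_uniq // => x y; rewrite !mem_enum; apply: g_inj.
Qed.

Lemma sum_card_fiber (T T' : finType) (g : T -> T') (Q : pred T) :
  (\sum_(t : T') #|[pred x | Q x && (g x == t)]| = #|Q|)%N.
Proof.
rewrite -sum1_card (partition_big g predT) //; apply: eq_bigr => t _.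
by rewrite -sum1_card.
Qed.

Lemma inf_le_inf_add (R : realType) (A B : set R) d : (A !=set0)%classic -> has_lbound B ->
  (forall a, A a -> exists2 b, B b & b <= a + d) -> inf B <= inf A + d.
Proof.
move=> A0 B_lb AB; rewrite -lerBlDr; apply: lb_le_inf A0 _ => a Aa.
by have [b Bb ba] := AB a Aa; rewrite lerBlDr (le_trans (ge_inf B_lb Bb)).
Qed.

Section SupportReduction.
Variables (F : realFieldType) (T : finType) (P : pred T) (m : nat).
Variable column : T -> 'I_m -> F.

Definition support (x : T -> F) : {set T} := [set a | P a && (x a != 0)].

Lemma exists_linear_dependence (A : {set T}) : (m < #|A|)%N ->
  exists lam : T -> F, [/\ forall a, a \notin A -> lam a = 0,
    exists a, lam a != 0 & forall i, \sum_a lam a * column a i = 0].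
Proof.
move=> Abig; pose M := \matrix_(j < #|A|, i < m) column (enum_val j) i.
have [u uM u0] := exists_nonzero_left_kernel M Abig.
pose lam a := \sum_(j | enum_val j == a) u 0 j.
have lamE j : lam (enum_val j) = u 0 j.
  by rewrite /lam (eq_bigl (pred1 j)) ?big_pred1_eq // => j'; rewrite /= (inj_eq enum_val_inj).
exists lam; split.
- move=> a aA; rewrite /lam big_pred0 // => j.
  by apply: contraNF aA => /eqP <-; apply: enum_valP.
- have [j uj0] : exists j, u 0 j != 0.
    apply/existsP; apply: contraR u0 => /existsPn u_eq0; apply/eqP/rowP => j.
    by rewrite mxE; apply/eqP/negPn.
  by exists (enum_val j); rewrite lamE.
- move=> i; transitivity ((u *m M) 0 i); last by rewrite uM mxE.
  rewrite mxE [RHS](partition_big (@enum_val _ (mem A)) predT) //=.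
  apply: eq_bigr => a _; rewrite mulr_suml; apply: eq_bigr => j /eqP <-.
  by rewrite mxE.
Qed.

Lemma exists_descent_direction (x : T -> F) : (m < #|support x|)%N ->
  exists lam : T -> F, [/\ forall a, lam a != 0 -> a \in support x,
    forall i, \sum_(a | P a) column a i * lam a = 0,
    \sum_(a | P a) lam a <= 0 & exists a, P a && (lam a < 0)].
Proof.
move=> big; have [lam [lam0 [a0 la0] lamcol]] := exists_linear_dependence big.
have lamP a : ~~ P a -> lam a = 0 by move=> Pa; apply: lam0; rewrite inE (negbTE Pa).
have sumP (G : T -> F) : \sum_(a | P a) G a * lam a = \sum_a G a * lam a.
  rewrite big_mkcond; apply: eq_bigr => a _.
  by case: ifP => // /negbT /lamP ->; rewrite mulr0.
pose sg : F := if \sum_(a | P a) lam a <= 0 then 1 else -1.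
have sg0 : sg != 0 by rewrite /sg; case: ifP; rewrite ?oppr_eq0 oner_eq0.
have sgsum : \sum_(a | P a) sg * lam a <= 0.
  rewrite -mulr_sumr /sg; case: ifP => [|/negbT]; first by rewrite mul1r.
  by rewrite -ltNge mulN1r oppr_le0 => /ltW.
exists (fun a => sg * lam a); split => //.
- by move=> a; rewrite mulf_eq0 negb_or => /andP [_]; apply: contraNT => /lam0 ->.
- move=> i; rewrite (eq_bigr (fun a => sg * (column a i * lam a))) => [|a _]; last by ring.
  rewrite -mulr_sumr sumP (eq_bigr (fun a => lam a * column a i)) ?lamcol ?mulr0 // => a _.
  by rewrite mulrC.
- apply/existsP; apply: contraLR sgsum => /existsPn nneg; rewrite -ltNge.
  have ge0 a : P a -> 0 <= sg * lam a by move=> Pa; have := nneg a; rewrite Pa /= leNgt.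
  have Pa0 : P a0 by apply: contraNT la0 => /lamP ->.
  rewrite (bigD1 a0) //= ltr_pwDl ?sumr_ge0 // => [|a /andP [Pa _]]; last exact: ge0.
  by rewrite lt_def mulf_neq0 // ge0.
Qed.

Lemma support_reduction_step (x : T -> F) :
  (forall a, P a -> 0 <= x a) -> (m < #|support x|)%N ->
  exists x' : T -> F, [/\ forall a, P a -> 0 <= x' a,
    forall i, \sum_(a | P a) column a i * x' a = \sum_(a | P a) column a i * x a,
    \sum_(a | P a) x' a <= \sum_(a | P a) x a &
    (#|support x'| < #|support x|)%N].
Proof.
move=> x_ge0 big; have [lam [lamS lamcol lamsum [a1 a1neg]]] := exists_descent_direction big.
(* Ratio test: the largest step along [lam] keeping [x] nonnegative; it zeroes [x a0]. *)
pose ratio a := x a / - lam a.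
case: (@arg_minP _ _ _ a1 (fun a => P a && (lam a < 0)) ratio a1neg) => a0 /andP [Pa0 la0] a0min.
pose tau := ratio a0.
have tau_ge0 : 0 <= tau by rewrite divr_ge0 ?x_ge0 // oppr_ge0 ltW.
exists (fun a => x a + tau * lam a); split.
- move=> a Pa; have [la_neg|] := ltP (lam a) 0; last first.
    by move=> la_ge0; apply: addr_ge0; [exact: x_ge0 | exact: mulr_ge0].
  have := a0min a; rewrite Pa la_neg /= => /(_ isT).
  by rewrite -/tau ler_pdivlMr ?oppr_gt0 // mulrN; lra.
- move=> i; rewrite (eq_bigr (fun a => column a i * x a + tau * (column a i * lam a))).
    by rewrite big_split /= -mulr_sumr lamcol mulr0 addr0.
  by move=> a _; ring.
- by rewrite big_split /= -mulr_sumr gerDl mulr_ge0_le0.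
- apply: proper_card; apply/properP; split.
    apply/fintype.subsetP => a; rewrite !inE => /andP [Pa]; rewrite Pa /=; apply: contraNneq => xa0.
    have : lam a == 0 by apply: contraLR isT => /lamS; rewrite inE xa0 eqxx andbF.
    by move/eqP ->; rewrite xa0 mulr0 addr0.
  exists a0; first by apply: lamS; rewrite lt_eqF.
  rewrite inE Pa0 /= negbK /tau /ratio; apply/eqP; field; exact: ltr0_neq0.
Qed.

Lemma support_reduction (x : T -> F) : (forall a, P a -> 0 <= x a) ->
  exists x' : T -> F, [/\ forall a, P a -> 0 <= x' a,
    forall i, \sum_(a | P a) column a i * x' a = \sum_(a | P a) column a i * x a,
    \sum_(a | P a) x' a <= \sum_(a | P a) x a &
    (#|support x'| <= m)%N].
Proof.
elim: {x}_.+1 {-2}x (ltnSn #|support x|) => // s IH x xs x_ge0.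
have [small|big] := leqP #|support x| m; first by exists x.
have [x1 [x1_ge0 x1col x1sum x1supp]] := support_reduction_step x_ge0 big.
have [x2 [x2_ge0 x2col x2sum x2supp]] := IH x1 (leq_trans x1supp xs) x1_ge0.
by exists x2; split=> // [i|]; [rewrite x2col x1col | exact: le_trans x1sum].
Qed.

End SupportReduction.

Section KTimesBinPacking.
Variables (R : realType) (S : R) (n : nat) (c : 'I_n -> R) (k : nat).
Hypothesis S_gt0 : 0 < S.
Hypothesis c_bounds : forall j, 0 < c j <= S.

Local Notation m := (mD c).
Local Notation csz := (@csz R n c).
Local Notation nsz := (@nsz R n c).

Lemma mem_dsizes j : c j \in dsizes c.
Proof. by rewrite mem_undup map_f ?mem_enum. Qed.

Definition size_class (j : 'I_n) : 'I_m := Ordinal (etrans (index_mem _ _) (mem_dsizes j)).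

Lemma csz_class j : csz (size_class j) = c j.
Proof. by rewrite /Defs.csz nth_index ?mem_dsizes. Qed.

Lemma csz_inj : injective csz.
Proof.
by move=> i i' /eqP; rewrite /Defs.csz nth_uniq ?undup_uniq // => /eqP /val_inj.
Qed.

Lemma size_classE j i : (c j == csz i) = (size_class j == i).
Proof. by rewrite -csz_class (inj_eq csz_inj). Qed.

Lemma size_class_surj i : exists j, size_class j = i.
Proof.
have : csz i \in dsizes c by rewrite mem_nth.
by rewrite mem_undup => /mapP [j _ cj]; exists j; apply/eqP; rewrite -size_classE cj.
Qed.

Lemma csz_bounds i : 0 < csz i <= S.
Proof. by have [j <-] := size_class_surj i; rewrite csz_class. Qed.

Lemma csz_ge0 i : 0 <= csz i.
Proof. by case/andP: (csz_bounds i) => /ltW. Qed.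

Definition same_size (i : 'I_m) : {set 'I_n} := [set j | size_class j == i].

Lemma nszE i : nsz i = #|same_size i|.
Proof.
by apply: eq_card => j; rewrite inE -size_classE; apply/idP/idP => [/set_mem|/mem_set].
Qed.

Lemma nsz_gt0 i : (0 < nsz i)%N.
Proof.
by have [j cj] := size_class_surj i; rewrite nszE; apply/card_gt0P; exists j; rewrite inE cj.
Qed.

Lemma nsz_le i : (nsz i <= n)%N.
Proof. by rewrite nszE (leq_trans (max_card _)) ?card_ord. Qed.

Definition bin := {ffun 'I_m -> nat}.
Definition load (b : bin) : R := \sum_i (b i)%:R * csz i.
Definition valid_bin (b : bin) := [forall i, b i <= nsz i]%N && (load b <= S).
Definition items (bs : seq bin) i := (\sum_(b <- bs) b i)%N.
Definition empty_bin : bin := [ffun => 0%N].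
Definition bin_add (b : bin) i : bin := [ffun j => b j + (j == i)]%N.

Lemma load_ge0 b : 0 <= load b.
Proof. by apply: sumr_ge0 => i _; rewrite mulr_ge0 ?csz_ge0. Qed.

Lemma load_empty : load empty_bin = 0.
Proof. by rewrite /load big1 // => i _; rewrite ffunE mul0r. Qed.

Lemma load_add b i : load (bin_add b i) = load b + csz i.
Proof.
rewrite /load (eq_bigr (fun j => (b j)%:R * csz j + (j == i)%:R * csz j)) => [|j _]; last first.
  by rewrite ffunE natrD mulrDl.
rewrite big_split /=; congr (_ + _).
by rewrite (bigD1 i) //= eqxx mul1r big1 ?addr0 // => j /negbTE ->; rewrite mul0r.
Qed.

Lemma load_sum (b b1 b2 : bin) : (forall i, b i = b1 i + b2 i)%N -> load b = load b1 + load b2.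
Proof. by move=> bE; rewrite /load -big_split; apply: eq_bigr => i _; rewrite bE natrD mulrDl. Qed.

Lemma items_cons b bs i : items (b :: bs) i = (b i + items bs i)%N.
Proof. by rewrite /items big_cons. Qed.

Lemma items_head bs i : items bs i = (head empty_bin bs i + items (behead bs) i)%N.
Proof. by case: bs => [|b bs]; rewrite ?items_cons // /items big_nil ffunE. Qed.

Lemma items_cat bs bs' i : items (bs ++ bs') i = (items bs i + items bs' i)%N.
Proof. by rewrite /items big_cat. Qed.

Lemma bin_ind (P : bin -> Prop) :
  P empty_bin -> (forall b i, P b -> P (bin_add b i)) -> forall b, P b.
Proof.
move=> P0 Padd b; elim: {b}_.+1 {-2}b (ltnSn (\sum_i b i)) => // s IH b bs.
have [->//|[i bi]] : b = empty_bin \/ exists i, (0 < b i)%N.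
  case: (pickP (fun i => 0 < b i)%N) => [i bi|b0]; [by right; exists i | left].
  by apply/ffunP => i; rewrite ffunE; apply/eqP; rewrite -leqn0 leqNgt b0.
pose b' : bin := [ffun j => b j - (j == i)]%N.
have -> : b = bin_add b' i.
  by apply/ffunP => j; rewrite !ffunE; case: eqP => [->|_]; rewrite ?subn0 ?addn0 ?subnK.
apply/Padd/IH; rewrite -ltnS (leq_trans _ bs) // ltnS (bigD1 i) //= [X in (_ < X)%N](bigD1 i) //=.
rewrite ffunE eqxx -addSn leq_add ?subn1 ?prednK //; apply: leq_sum => j /negbTE ji.
by rewrite ffunE ji subn0.
Qed.

(* Next fit with the open bin at the head of [bs]: a bin is closed only when the next item
   overflows it, so each closed bin and its successor together weigh more than [S]. *)
Lemma next_fit_invariant (q : bin) : (forall i, q i <= nsz i)%N ->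
  exists bs, [/\ all valid_bin bs, forall i, items bs i = q i &
    S * (size bs).-1%:R + load (head empty_bin bs) <= 2 * load q].
Proof.
elim/bin_ind: q => [_|q i IH qle].
  exists [::]; split=> // [i|]; first by rewrite /items big_nil ffunE.
  by rewrite /= load_empty mulr0 addr0 mulr0.
have [j|bs [bs_valid bs_items bs_inv]] := IH.
  by apply: leq_trans (qle j); rewrite ffunE leq_addr.
have items_add (b : bin) bs' j : (b j + items bs' j)%N = q j ->
    items (bin_add b i :: bs') j = bin_add q i j.
  by move=> e; rewrite items_cons !ffunE -e addnAC.
set b := head empty_bin bs.
have [fit|overflow] := boolP (load b + csz i <= S).
- exists (bin_add b i :: behead bs); split.
  + rewrite /= [valid_bin _]/valid_bin load_add fit andbT; apply/andP; split.
      apply/forallP => j; apply: leq_trans (qle j); rewrite !ffunE leq_add2r -bs_items items_head.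
      exact: leq_addr.
    by case: bs bs_valid {b fit bs_items bs_inv} => //= ? ? /andP [].
  + by move=> j; apply: items_add; rewrite -items_head bs_items.
  + rewrite /= !load_add size_behead; have := csz_ge0 i; lra.
- exists (bin_add empty_bin i :: bs); split.
  + rewrite /= bs_valid andbT /valid_bin load_add load_empty add0r.
    rewrite (proj2 (andP (csz_bounds i))) andbT; apply/forallP => j.
    by rewrite !ffunE; case: eqP => [->|]; rewrite ?nsz_gt0.
  + by move=> j; apply: items_add; rewrite ffunE add0n bs_items.
  + case: bs {bs_valid bs_items} @b bs_inv overflow => [|b bs] /= inv.
      by rewrite load_empty add0r (proj2 (andP (csz_bounds i))).
    rewrite -ltNge !load_add load_empty add0r -natr1 mulrDr mulr1 => over.
    have := load_ge0 q; lra.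
Qed.

Lemma next_fit (q : bin) : (forall i, q i <= nsz i)%N ->
  exists bs, [/\ all valid_bin bs, forall i, items bs i = q i &
    S * (size bs)%:R <= 2 * load q + S].
Proof.
case/next_fit_invariant => bs [bs_valid bs_items inv]; exists bs; split => //.
apply: le_trans (_ : S * ((size bs).-1%:R + 1) <= _).
  by rewrite ler_pM2l // natr1 ler_nat leqSpred.
by rewrite mulrDr mulr1 lerD2r (le_trans _ inv) // lerDl load_ge0.
Qed.

(* A bin holds at most [nsz i] items of class [i] (copies of distinct items), so a demand of
   up to [K * nsz i] is split into [K] layers, each packed by next fit. *)
Lemma next_fit_layers K (q : bin) : (forall i, q i <= K * nsz i)%N ->
  exists bs, [/\ all valid_bin bs, forall i, items bs i = q i &
    S * (size bs)%:R <= 2 * load q + K%:R * S].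
Proof.
elim: K q => [|K IH] q qle.
  exists [::]; split=> // [i|]; last by rewrite /= mulr0 mul0r addr0 mulr_ge0 ?load_ge0.
  by move: (qle i); rewrite mul0n leqn0 /items big_nil => /eqP.
pose q1 : bin := [ffun i => minn (q i) (nsz i)].
pose q2 : bin := [ffun i => q i - nsz i]%N.
have [|bs1 [valid1 items1 size1]] := @next_fit q1; first by move=> i; rewrite ffunE geq_minr.
have [|bs2 [valid2 items2 size2]] := IH q2.
  by move=> i; rewrite ffunE leq_subLR -mulSn.
have q_split i : q i = (q1 i + q2 i)%N by rewrite !ffunE minnE subnK ?leq_subr.
exists (bs1 ++ bs2); split.
- by rewrite all_cat valid1 valid2.
- by move=> i; rewrite items_cat items1 items2 q_split.
- by rewrite size_cat natrD (load_sum q_split) -natr1; lra.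
Qed.

Definition class_rank (j : 'I_n) := index j (enum (same_size (size_class j))).

Lemma class_rank_lt j : (class_rank j < nsz (size_class j))%N.
Proof. by rewrite nszE cardE index_mem mem_enum inE. Qed.

Lemma class_rank_inj j j' : size_class j = size_class j' -> class_rank j = class_rank j' -> j = j'.
Proof.
rewrite /class_rank => cj e.
have jin j0 : size_class j0 = size_class j -> j0 \in enum (same_size (size_class j)).
  by rewrite mem_enum inE => ->.
by rewrite -[j](nth_index j (jin j erefl)) -[j'](nth_index j (jin j' (esym cj))) e cj.
Qed.

(* The copies of class [i] are numbered by slots [l * nsz i + class_rank j] and bins take
   consecutive slots; two copies of one item are [nsz i] slots apart, which no bin spans. *)
Definition slot j (l : 'I_k) := (l * nsz (size_class j) + class_rank j)%N.

Lemma slot_lt j l : (slot j l < k * nsz (size_class j))%N.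
Proof.
rewrite /slot; apply: leq_trans (_ : l.+1 * nsz (size_class j) <= _)%N.
  by rewrite mulSn addnC ltn_add2r class_rank_lt.
by rewrite leq_mul2r ltn_ord orbT.
Qed.

Lemma slot_inj j j' l l' :
  size_class j = size_class j' -> slot j l = slot j' l' -> j = j' /\ l = l'.
Proof.
rewrite /slot => cj; rewrite -cj => e.
have rj' : (class_rank j' < nsz (size_class j))%N by rewrite cj class_rank_lt.
have nsz0 := nsz_gt0 (size_class j).
have ll : l = l' :> nat.
  have := congr1 (divn^~ (nsz (size_class j))) e.
  by rewrite !divnMDl // !divn_small ?class_rank_lt // !addn0.
split; last exact: val_inj.
by apply: class_rank_inj => //; move/eqP: e; rewrite ll eqn_add2l => /eqP.
Qed.

Lemma slot_window j l l' p d : (d <= nsz (size_class j))%N ->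
  (p <= slot j l < p + d)%N -> (p <= slot j l' < p + d)%N -> l = l'.
Proof.
rewrite /slot; set nu := nsz _ => dnu.
have step a b : (a < b)%N -> (a * nu + nu <= b * nu)%N.
  by move=> ab; rewrite addnC -mulSn leq_mul2r ab orbT.
by case: (ltngtP l l') => [/step|/step|/val_inj] //; lia.
Qed.

Section BinAssignment.
Variable bs : seq bin.
Hypothesis bs_valid : all valid_bin bs.
Hypothesis bs_items : forall i, (k * nsz i <= items bs i)%N.

Local Notation N := (size bs).
Local Notation nth_bin := (nth empty_bin bs).

Definition prefix i t := (\sum_(0 <= t' < t) nth_bin t' i)%N.

Lemma prefix_step i t : prefix i t.+1 = (prefix i t + nth_bin t i)%N.
Proof. by rewrite /prefix big_nat_recr. Qed.

Lemma prefix_size i : prefix i N = items bs i.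
Proof. by rewrite /items (big_nth empty_bin). Qed.

Lemma nth_bin_valid (t : 'I_N) : valid_bin (nth_bin t).
Proof. by apply: (allP bs_valid); rewrite mem_nth. Qed.

Lemma exists_bin_of_slot j l : exists t : 'I_N,
  (prefix (size_class j) t <= slot j l < prefix (size_class j) t.+1)%N.
Proof.
have mono t : (prefix (size_class j) t <= prefix (size_class j) t.+1)%N.
  by rewrite prefix_step leq_addr.
have inside : (prefix (size_class j) 0 <= slot j l < prefix (size_class j) N)%N.
  by rewrite {1}/prefix big_geq // prefix_size (leq_trans (slot_lt j l)) ?bs_items.
by have [t tN tP] := exists_bracket mono inside; exists (Ordinal tN).
Qed.

Lemma packable_of_bins : packable S c k N.
Proof.
have [f f_slot] := fin_all_exists (fun j => fin_all_exists (exists_bin_of_slot j)).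
exists f; split.
  move=> j l l' e; have := f_slot j l'; rewrite -e prefix_step.
  apply: slot_window; last by rewrite -prefix_step f_slot.
  by have /andP [/forallP] := nth_bin_valid (f j l).
move=> t; rewrite (partition_big (fun p : 'I_n * 'I_k => size_class p.1) predT) //=.
apply: le_trans (proj2 (andP (nth_bin_valid t))); apply: ler_sum => i _.
rewrite (eq_bigr (fun _ => csz i)) => [|p /andP [_ /eqP <-]]; last by rewrite csz_class.
rewrite sumr_const mulr_natl ler_wpMn2l ?csz_ge0 //.
apply: (@card_le_window _ _ (fun p => slot p.1 p.2) (prefix i t)) => [[j l] [j' l']|[j l]].
  rewrite !unfold_in /= => /andP [_ /eqP cj] /andP [_ /eqP cj'] e.
  by have [-> ->] := slot_inj (etrans cj (esym cj')) e.
by rewrite unfold_in /= => /andP [/eqP <- /eqP <-]; rewrite -prefix_step f_slot.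
Qed.

End BinAssignment.

Local Notation cfg := (@is_config R S n c).
Local Notation cand := (Defs.cand c).

Definition bin_of_config (a : cand) : bin := [ffun i => nat_of_ord (a i)].

Lemma is_config_bin a : cfg a = valid_bin (bin_of_config a).
Proof.
rewrite /is_config /valid_bin /load; congr (_ && _).
  by apply: eq_forallb => i; rewrite ffunE.
by congr (_ <= _); apply: eq_bigr => i _; rewrite ffunE.
Qed.

Definition bins_of (y : cand -> nat) : seq bin :=
  flatten [seq nseq (if cfg a then y a else 0) (bin_of_config a) | a <- index_enum cand].

Lemma sum_bins_of (F : bin -> nat) y :
  (\sum_(b <- bins_of y) F b = \sum_(a | cfg a) y a * F (bin_of_config a))%N.
Proof.
rewrite big_flatten big_map [RHS]big_mkcond; apply: eq_bigr => a _.
by rewrite big_nseq iter_addn_0 mulnC; case: ifP.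
Qed.

Lemma bins_of_valid y : all valid_bin (bins_of y).
Proof.
apply/allP => b /flattenP [_ /mapP [a _ ->]]; rewrite mem_nseq.
by case: ifP => // cfga /andP [_ /eqP ->]; rewrite -is_config_bin.
Qed.

Lemma size_bins_of y : size (bins_of y) = (\sum_(a | cfg a) y a)%N.
Proof. by rewrite -sum1_size sum_bins_of; apply: eq_bigr => a _; rewrite muln1. Qed.

Lemma items_bins_of y i : items (bins_of y) i = (\sum_(a | cfg a) y a * a i)%N.
Proof. by rewrite /items sum_bins_of; apply: eq_bigr => a _; rewrite ffunE. Qed.

Section PackingToLP.
Variables (N : nat) (f : 'I_n -> 'I_k -> 'I_N).
Hypothesis f_packing : packing S c f.

Definition class_count (t : 'I_N) i :=
  #|[pred p : 'I_n * 'I_k | (size_class p.1 == i) && (f p.1 p.2 == t)]|.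

Lemma class_count_le t i : (class_count t i <= nsz i)%N.
Proof.
rewrite /class_count; set A := [pred p | _].
have fst_inj : {in A &, injective (@fst 'I_n 'I_k)}.
  move=> [j l] [j' l']; rewrite !unfold_in /= => /andP [_ /eqP fl] /andP [_ /eqP fl'] jj.
  by move: fl'; rewrite -jj -fl => /(proj1 f_packing j) ->.
rewrite nszE -(card_in_image fst_inj); apply/subset_leq_card/fintype.subsetP.
by move=> j /mapP [p]; rewrite mem_enum => /andP [ci _] ->; rewrite inE.
Qed.

Lemma sum_class_count i : (\sum_t class_count t i = k * nsz i)%N.
Proof.
rewrite sum_card_fiber nszE; transitivity #|finset.setX (same_size i) [set: 'I_k]|.
  by apply: eq_card => -[j l]; rewrite !inE andbT.
by rewrite cardsX cardsT card_ord mulnC.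
Qed.

Definition bin_config t : cand := [ffun i => inord (class_count t i)].

Lemma bin_configE t i : bin_config t i = class_count t i :> nat.
Proof. by rewrite ffunE inordK // ltnS (leq_trans (class_count_le t i)) ?nsz_le. Qed.

Lemma bin_config_is_config t : cfg (bin_config t).
Proof.
apply/andP; split; first by apply/forallP => i; rewrite bin_configE class_count_le.
apply: le_trans (proj2 f_packing t).
rewrite (partition_big (fun p : 'I_n * 'I_k => size_class p.1) predT) //=.
apply: ler_sum => i _; rewrite (eq_bigr (fun _ => csz i)) => [|p /andP [_ /eqP <-]]; last first.
  by rewrite csz_class.
rewrite sumr_const mulr_natl bin_configE le_eqVlt; apply/orP; left; apply/eqP.
by congr (_ *+ _); apply: eq_card => p; rewrite !inE andbC.
Qed.

Definition packing_lp (a : cand) : R := #|[pred t | bin_config t == a]|%:R.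

Lemma packing_lp_sum (G : cand -> R) :
  \sum_(a | cfg a) G a * packing_lp a = \sum_(t : 'I_N) G (bin_config t).
Proof.
rewrite [RHS](partition_big bin_config cfg) => [|t _]; last exact: bin_config_is_config.
apply: eq_bigr => a _; rewrite /packing_lp -sum1_card natr_sum mulr_sumr.
by apply: eq_bigr => t /eqP ->; rewrite mulr1.
Qed.

Lemma packing_lp_feasible : lp_feasible S k packing_lp.
Proof.
split=> [a _|i]; first exact: ler0n.
rewrite packing_lp_sum -(sum_class_count i) natr_sum.
by apply: eq_bigr => t _; rewrite bin_configE.
Qed.

Lemma packing_lp_value : lp_value S packing_lp = N%:R.
Proof.
rewrite /lp_value (eq_bigr (fun a => 1 * packing_lp a)) => [|a _]; last by rewrite mul1r.
by rewrite packing_lp_sum sumr_const card_ord.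
Qed.

End PackingToLP.

Lemma sum_sizes_by_class : \sum_j c j = \sum_i (nsz i)%:R * csz i.
Proof.
rewrite (partition_big size_class predT) //=; apply: eq_bigr => i _.
rewrite (eq_bigr (fun _ => csz i)) => [|j /eqP <-]; last by rewrite csz_class.
by rewrite sumr_const mulr_natl nszE; congr (_ *+ _); apply: eq_card => j; rewrite !inE.
Qed.

Lemma volume_le_lp_value (x : cand -> R) : lp_feasible S k x -> VDk c k <= S * lp_value S x.
Proof.
move=> [x_ge0 x_eq]; rewrite /VDk sum_sizes_by_class mulr_sumr.
rewrite (eq_bigr (fun i => \sum_(a | cfg a) x a * ((a i)%:R * csz i))) => [|i _]; last first.
  by rewrite mulrA -natrM -x_eq mulr_suml; apply: eq_bigr => a _; ring.
rewrite exchange_big /lp_value mulr_sumr; apply: ler_sum => a cfga.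
by rewrite -mulr_sumr mulrC ler_wpM2r ?x_ge0 //; case/andP: cfga.
Qed.

Section Rounding.
Variable x : cand -> R.
Hypothesis x_feasible : lp_feasible S k x.

Lemma bins_of_cover (y : cand -> nat) : (forall a, cfg a -> x a <= (y a)%:R) ->
  forall i, (k * nsz i <= items (bins_of y) i)%N.
Proof.
move=> x_le_y i; rewrite items_bins_of -(ler_nat R) -(proj2 x_feasible i) natr_sum.
apply: ler_sum => a cfga; rewrite natrM [X in _ <= X]mulrC.
by apply: ler_wpM2l; [exact: ler0n | exact: x_le_y].
Qed.

Lemma round_down_refill (y : cand -> nat) : (forall a, cfg a -> (y a)%:R <= x a) ->
  exists bs, [/\ all valid_bin bs, forall i, (k * nsz i <= items bs i)%N &
    (size bs)%:R <= \sum_(a | cfg a) (y a)%:R + 2 * \sum_(a | cfg a) (x a - (y a)%:R) + k%:R].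
Proof.
move=> y_le_x; have [x_ge0 x_eq] := x_feasible.
have y_items i : (items (bins_of y) i <= k * nsz i)%N.
  rewrite items_bins_of -(ler_nat R) -x_eq natr_sum; apply: ler_sum => a cfga.
  rewrite natrM [X in X <= _]mulrC.
  by apply: ler_wpM2l; [exact: ler0n | exact: y_le_x].
pose q : bin := [ffun i => k * nsz i - items (bins_of y) i]%N.
have [|bs [bs_valid bs_items bs_size]] := @next_fit_layers k q.
  by move=> i; rewrite ffunE leq_subr.
have q_load : load q <= S * \sum_(a | cfg a) (x a - (y a)%:R).
  rewrite /load (eq_bigr (fun i => \sum_(a | cfg a) (x a - (y a)%:R) * ((a i)%:R * csz i))).
    rewrite exchange_big mulr_sumr; apply: ler_sum => a cfga.
    by rewrite -mulr_sumr mulrC ler_wpM2r ?subr_ge0 ?y_le_x //; case/andP: cfga.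
  move=> i _; rewrite ffunE natrB // -x_eq items_bins_of natr_sum -sumrB mulr_suml.
  by apply: eq_bigr => a _; rewrite natrM; ring.
exists (bins_of y ++ bs); split.
- by rewrite all_cat bins_of_valid.
- by move=> i; rewrite items_cat bs_items ffunE subnKC.
- rewrite size_cat natrD size_bins_of natr_sum -addrA lerD2l.
  by rewrite -(ler_pM2l S_gt0); nra.
Qed.

Lemma round_basic_solution : (#|support cfg x| <= m)%N ->
  exists bs, [/\ all valid_bin bs, forall i, (k * nsz i <= items bs i)%N &
    (size bs)%:R <= lp_value S x + (m%:R + k%:R) / 2].
Proof.
move=> x_supp; have [x_ge0 _] := x_feasible.
pose t a := Num.truncn (x a).
have t_bounds a : cfg a -> (t a)%:R <= x a < (t a).+1%:R by move/x_ge0/truncn_itv.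
pose floor_sum := \sum_(a | cfg a) ((t a)%:R : R).
pose frac_sum := \sum_(a | cfg a) (x a - (t a)%:R).
have value_split : lp_value S x = floor_sum + frac_sum.
  by rewrite -big_split /=; apply: eq_bigr => a _; rewrite subrKC.
have frac_ge0 : 0 <= frac_sum.
  by apply: sumr_ge0 => a /t_bounds /andP []; rewrite subr_ge0.
pose y a := (t a + (x a != (t a)%:R))%N.
have x_le_y a : cfg a -> x a <= (y a)%:R.
  move=> /t_bounds /andP [tx xt]; rewrite /y; case: eqP => [->|_] /=; first by rewrite addn0.
  by rewrite addn1 ltW.
have y_size : (size (bins_of y))%:R <= floor_sum + m%:R.
  rewrite size_bins_of big_split natrD natr_sum lerD2l ler_nat (leq_trans _ x_supp) //.
  rewrite -sum1_card [X in (_ <= X)%N]big_mkcond (big_mkcond cfg) /=; apply: leq_sum => a _.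
  rewrite inE; case: ifP => //= _; case: (eqVneq (x a) 0) => [x0|_]; last by case: (_ != _).
  by rewrite /t x0 truncn0 eqxx.
have t_le_x a : cfg a -> (t a)%:R <= x a by case/t_bounds/andP.
have [bs [bs_valid bs_items bs_size]] := round_down_refill t_le_x.
rewrite -/floor_sum -/frac_sum in bs_size.
have [le|lt] := leqP (size (bins_of y)) (size bs).
  exists (bins_of y); split; [exact: bins_of_valid | exact: bins_of_cover x_le_y |].
  by rewrite value_split; move: le; rewrite -(ler_nat R) => le; lra.
exists bs; split => //; rewrite value_split; move/ltnW: lt; rewrite -(ler_nat R) => le; lra.
Qed.

End Rounding.

Lemma exists_packing : exists N, packable S c k N.
Proof.
have [|bs [bs_valid bs_items _]] := @next_fit_layers k [ffun i => k * nsz i]%N.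
  by move=> i; rewrite ffunE.
by exists (size bs); apply: packable_of_bins => // i; rewrite bs_items ffunE.
Qed.

Lemma exists_packing_le_lp_value (x : cand -> R) : lp_feasible S k x ->
  exists2 N, packable S c k N & N%:R <= lp_value S x + (m%:R + k%:R) / 2.
Proof.
move=> [x_ge0 x_eq].
have [x' [x'_ge0 x'_eq x'_value x'_supp]] := support_reduction (fun (a : cand) i => (a i)%:R) x_ge0.
have x'_feasible : lp_feasible S k x' by split=> // i; rewrite x'_eq x_eq.
have [bs [bs_valid bs_items bs_size]] := round_basic_solution x'_feasible x'_supp.
exists (size bs); first exact: packable_of_bins.
by apply: le_trans bs_size _; rewrite lerD2r.
Qed.

Let lp_values := [set v | exists x : cand -> R, lp_feasible S k x /\ v = lp_value S x]%classic.
Let packing_sizes := [set (N%:R : R) | N in packable S c k]%classic.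

Lemma lp_values_packable N : packable S c k N -> lp_values N%:R.
Proof.
case=> f f_packing; exists (packing_lp f).
by rewrite (packing_lp_value f_packing); split => //; apply: packing_lp_feasible.
Qed.

Lemma packing_sizes_nonempty : (packing_sizes !=set0)%classic.
Proof. by have [N N_packable] := exists_packing; exists N%:R, N. Qed.

Lemma lp_values_nonempty : (lp_values !=set0)%classic.
Proof. by have [N /lp_values_packable] := exists_packing; exists N%:R. Qed.

Lemma lp_values_lbound : has_lbound lp_values.
Proof. by exists 0 => _ [x [[x_ge0 _] ->]]; apply: sumr_ge0. Qed.

Lemma packing_sizes_lbound : has_lbound packing_sizes.
Proof. by exists 0 => _ [N _ <-]; apply: ler0n. Qed.

Lemma volume_le_LIN : VDk c k <= S * LIN S c k.
Proof.
rewrite mulrC -ler_pdivrMr //; apply: lb_le_inf lp_values_nonempty _ => _ [x [x_feasible ->]].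
by rewrite ler_pdivrMr // mulrC volume_le_lp_value.
Qed.

Lemma LIN_le_OPT : LIN S c k <= OPT S c k.
Proof.
rewrite -[OPT _ _ _]addr0.
apply: inf_le_inf_add packing_sizes_nonempty lp_values_lbound _ => _ [N N_packable <-].
by exists N%:R; [exact: lp_values_packable | rewrite addr0].
Qed.

Lemma OPT_le_LIN : OPT S c k <= LIN S c k + (m%:R + k%:R) / 2.
Proof.
apply: inf_le_inf_add lp_values_nonempty packing_sizes_lbound _ => _ [x [x_feasible ->]].
by have [N N_packable N_le] := exists_packing_le_lp_value x_feasible; exists N%:R => //; exists N.
Qed.

End KTimesBinPacking.

Theorem lemma11 (R : realType) (S : R) (n : nat) (c : 'I_n -> R) (k : nat) :
  0 < S -> (forall i, 0 < c i <= S) -> (1 <= k)%N ->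
  [/\ VDk c k <= S * LIN S c k,
      S * LIN S c k <= S * OPT S c k &
      S * OPT S c k <= S * LIN S c k + S * ((mD c)%:R + k%:R) / 2].
Proof.
move=> S_gt0 c_bounds _; split.
- exact: volume_le_LIN.
- by rewrite ler_pM2l // LIN_le_OPT.
- by rewrite -mulrA -mulrDr ler_pM2l // OPT_le_LIN.
Qed.
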